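(* Let $C=(C_1,C_0,s,t,\varepsilon,m)$ be an internal category in $\mathsf{XMod}$ with $C_1=(A_1,B_1,\alpha_1)$, $C_0=(A_0,B_0,\alpha_0)$. Put $L=\ker s_A$, $M=\ker s_B$, $N=A_0$, $P=B_0$, $\lambda=\alpha_1|_{L}:L\to M$, $\lambda'=t_A|_{L}:L\to N$, $\mu=t_B|_{M}:M\to P$, $\nu=\alpha_0:N\to P$. Let $P$ act on $N$ by the given action of $B_0$ on $A_0$, on $M$ by $p\cdot m=1_p+m-1_p$, and on $L$ by $p\cdot l=1_p\cdot l$ (action of $B_1$ on $A_1$). Define $h:M\times N\to L$ by $h(m,n)=m\cdot 1_n-1_n$, where $m\cdot 1_n$ is the action of $m\in B_1$ on $1_n\in A_1$. Then $(L,M,N,P)$ with these data is a crossed square.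
   Context: Groups are written additively. A crossed module $(A,B,\alpha)$: groups $A,B$, a left action of $B$ on $A$ by automorphisms, a homomorphism $\alpha:A\to B$ with $\alpha(b\cdot a)=b+\alpha(a)-b$ and $\alpha(a)\cdot a'=a+a'-a$. Morphisms $\langle f_A,f_B\rangle$ are pairs of homomorphisms with $f_B\alpha=\alpha'f_A$, $f_A(b\cdot a)=f_B(b)\cdot f_A(a)$. An internal category in $\mathsf{XMod}$ consists of crossed modules $C_1=(A_1,B_1,\alpha_1)$, $C_0=(A_0,B_0,\alpha_0)$ and crossed module morphisms $s=\langle s_A,s_B\rangle, t=\langle t_A,t_B\rangle:C_1\to C_0$, $\varepsilon=\langle\varepsilon_A,\varepsilon_B\rangle:C_0\to C_1$, $m=\langle m_A,m_B\rangle:C_1\,{}_s\!\times_t C_1\to C_1$ (pullback computed componentwise, pairs $(x,y)$ with $s(x)=t(y)$, componentwise action) satisfying $s\varepsilon=t\varepsilon=1$, $sm=s\pi_2$, $tm=t\pi_1$, associativity $m(1\times m)=m(m\times1)$ and unit laws $m(\varepsilon s,1)=m(1,\varepsilon t)=1$. Notation: $1_x=\varepsilon_A(x)$ or $\varepsilon_B(x)$. A crossed square: homomorphisms $\lambda:L\to M$, $\lambda':L\to N$, $\mu:M\to P$, $\nu:N\to P$ with $\nu\lambda'=\mu\lambda$, left actions of $P$ on $L,M,N$ (inducing actions of $M$ on $L,N$ via $\mu$ and of $N$ on $L,M$ via $\nu$), and $h:M\times N\to L$, such that (i) $\lambda,\lambda'$ are $P$-equivariant and $\mu$, $\nu$,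 $\mu\lambda$ are crossed modules; (ii) $\lambda h(m,n)=m+n\cdot(-m)$, $\lambda'h(m,n)=m\cdot n-n$; (iii) $h(\lambda(l),n)=l+n\cdot(-l)$, $h(m,\lambda'(l))=m\cdot l-l$; (iv) $h(m+m',n)=m\cdot h(m',n)+h(m,n)$, $h(m,n+n')=h(m,n)+n\cdot h(m,n')$; (v) $h(p\cdot m,p\cdot n)=p\cdot h(m,n)$. *)

From Stdlib Require Import ProofIrrelevance.
Set Implicit Arguments.
Unset Strict Implicit.

Record Grp := {
  gcar :> Type;
  gadd : gcar -> gcar -> gcar;
  gzero : gcar;
  gopp : gcar -> gcar;
  gaddA : forall x y z, gadd x (gadd y z) = gadd (gadd x y) z;
  gadd0l : forall x, gadd gzero x = x;
  gadd0r : forall x, gadd x gzero = x;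
  gaddNl : forall x, gadd (gopp x) x = gzero;
  gaddNr : forall x, gadd x (gopp x) = gzero }.

Arguments gadd {_} _ _.
Arguments gzero {_}.
Arguments gopp {_} _.

Declare Scope grp_scope.
Delimit Scope grp_scope with grp.
Notation "x + y" := (gadd x y) : grp_scope.
Notation "- x" := (gopp x) : grp_scope.
Notation "x - y" := (gadd x (gopp y)) : grp_scope.
Notation "0" := gzero : grp_scope.
Open Scope grp_scope.

Section GrpTheory.
Variable G : Grp.
Implicit Types x y z : G.

Lemma addKl x y z : x + y = x + z -> y = z.
Proof.
  intro H. rewrite <- (gadd0l y), <- (gadd0l z), <- (gaddNl x), <- !gaddA, H.
  reflexivity.
Qed.

Lemma addKr x y z : y + x = z + x -> y = z.
Proof.
  intro H. rewrite <- (gadd0r y), <- (gadd0r z), <- (gaddNr x), !gaddA, H.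
  reflexivity.
Qed.
End GrpTheory.

Definition is_hom (G H : Grp) (f : G -> H) := forall x y, f (x + y) = f x + f y.

Lemma hom0 (G H : Grp) (f : G -> H) : is_hom f -> f 0 = 0.
Proof.
  intro hf. apply (@addKr H (f 0)). rewrite <- hf, !gadd0l. reflexivity.
Qed.

Lemma homN (G H : Grp) (f : G -> H) x : is_hom f -> f (- x) = - f x.
Proof.
  intro hf. apply (@addKr H (f x)). rewrite <- hf, gaddNl, gaddNl.
  apply hom0; exact hf.
Qed.

Record is_action (P X : Grp) (a : P -> X -> X) : Prop := {
  act0 : forall x, a 0 x = x;
  actD : forall p q x, a (p + q) x = a p (a q x);
  act_hom : forall p, is_hom (a p) }.

Record is_xmod (A B : Grp) (act : B -> A -> A) (alpha : A -> B) : Prop := {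
  xm_action : is_action act;
  xm_hom : is_hom alpha;
  xm_equiv : forall b a, alpha (act b a) = b + alpha a - b;
  xm_peiffer : forall a a', act (alpha a) a' = a + a' - a }.

Record XMod := {
  xA : Grp;
  xB : Grp;
  xact : xB -> xA -> xA;
  xalpha : xA -> xB;
  xmodP : is_xmod xact xalpha }.
Arguments xact : clear implicits.
Arguments xalpha : clear implicits.

Record is_xmorph (C D : XMod) (fA : xA C -> xA D) (fB : xB C -> xB D) : Prop := {
  xmor_homA : is_hom fA;
  xmor_homB : is_hom fB;
  xmor_alpha : forall a, fB (xalpha C a) = xalpha D (fA a);
  xmor_act : forall b a, fA (xact C b a) = xact D (fB b) (fA a) }.
Arguments is_xmorph : clear implicits.

(* The composition m is defined on the pullback C1 _s x_t C1, i.e. on   *)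
(* pairs (x,y) with s x = t y; we encode it as a function taking a      *)
(* proof of composability.  Being a morphism of crossed modules out of  *)
(* the (componentwise) pullback crossed module is spelled out below.    *)
Unset Implicit Arguments.
Record IntCatXMod := {
  ic1 : XMod;
  ic0 : XMod;
  sA : xA ic1 -> xA ic0;
  sB : xB ic1 -> xB ic0;
  tA : xA ic1 -> xA ic0;
  tB : xB ic1 -> xB ic0;
  eA : xA ic0 -> xA ic1;
  eB : xB ic0 -> xB ic1;
  mA : forall x y : xA ic1, sA x = tA y -> xA ic1;
  mB : forall x y : xB ic1, sB x = tB y -> xB ic1;
  s_xmorph : is_xmorph ic1 ic0 sA sB;
  t_xmorph : is_xmorph ic1 ic0 tA tB;
  e_xmorph : is_xmorph ic0 ic1 eA eB;
  mA_hom : forall x y x' y' (H : sA x = tA y) (H' : sA x' = tA y')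
             (H'' : sA (x + x') = tA (y + y')),
             mA (x + x') (y + y') H'' = mA x y H + mA x' y' H';
  mB_hom : forall x y x' y' (H : sB x = tB y) (H' : sB x' = tB y')
             (H'' : sB (x + x') = tB (y + y')),
             mB (x + x') (y + y') H'' = mB x y H + mB x' y' H';
  m_alpha : forall x y (H : sA x = tA y)
              (H' : sB (xalpha ic1 x) = tB (xalpha ic1 y)),
              mB (xalpha ic1 x) (xalpha ic1 y) H' = xalpha ic1 (mA x y H);
  m_act : forall b b' x y (Hb : sB b = tB b') (Hx : sA x = tA y)
            (H' : sA (xact ic1 b x) = tA (xact ic1 b' y)),
            mA (xact ic1 b x) (xact ic1 b' y) H' = xact ic1 (mB b b' Hb) (mA x y Hx);
  seA : forall a, sA (eA a) = a;
  seB : forall b, sB (eB b) = b;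
  teA : forall a, tA (eA a) = a;
  teB : forall b, tB (eB b) = b;
  smA : forall x y (H : sA x = tA y), sA (mA x y H) = sA y;
  smB : forall x y (H : sB x = tB y), sB (mB x y H) = sB y;
  tmA : forall x y (H : sA x = tA y), tA (mA x y H) = tA x;
  tmB : forall x y (H : sB x = tB y), tB (mB x y H) = tB x;
  assocA : forall x y z (H1 : sA x = tA y) (H2 : sA y = tA z)
             (H3 : sA x = tA (mA y z H2)) (H4 : sA (mA x y H1) = tA z),
             mA x (mA y z H2) H3 = mA (mA x y H1) z H4;
  assocB : forall x y z (H1 : sB x = tB y) (H2 : sB y = tB z)
             (H3 : sB x = tB (mB y z H2)) (H4 : sB (mB x y H1) = tB z),
             mB x (mB y z H2) H3 = mB (mB x y H1) z H4;
  unitlA : forall x (H : sA (eA (tA x)) = tA x), mA (eA (tA x)) x H = x;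
  unitrA : forall x (H : sA x = tA (eA (sA x))), mA x (eA (sA x)) H = x;
  unitlB : forall x (H : sB (eB (tB x)) = tB x), mB (eB (tB x)) x H = x;
  unitrB : forall x (H : sB x = tB (eB (sB x))), mB x (eB (sB x)) H = x }.
Set Implicit Arguments.

Record crossed_square (L M N P : Grp) (lam : L -> M) (lam' : L -> N)
    (mu : M -> P) (nu : N -> P)
    (aL : P -> L -> L) (aM : P -> M -> M) (aN : P -> N -> N)
    (h : M -> N -> L) : Prop := {
  cs_lam_hom : is_hom lam;
  cs_lam'_hom : is_hom lam';
  cs_mu_hom : is_hom mu;
  cs_nu_hom : is_hom nu;
  cs_comm : forall l, nu (lam' l) = mu (lam l);
  cs_actL : is_action aL;
  cs_actM : is_action aM;
  cs_actN : is_action aN;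
  cs_lam_equiv : forall p l, lam (aL p l) = aM p (lam l);
  cs_lam'_equiv : forall p l, lam' (aL p l) = aN p (lam' l);
  cs_mu_xmod : is_xmod aM mu;
  cs_nu_xmod : is_xmod aN nu;
  cs_mulam_xmod : is_xmod aL (fun l => mu (lam l));
  cs_lam_h : forall m n, lam (h m n) = m + aM (nu n) (- m);
  cs_lam'_h : forall m n, lam' (h m n) = aN (mu m) n - n;
  cs_h_laml : forall l n, h (lam l) n = l + aL (nu n) (- l);
  cs_h_lam'r : forall m l, h m (lam' l) = aL (mu m) l - l;
  cs_hDl : forall m m' n, h (m + m') n = aL (mu m) (h m' n) + h m n;
  cs_hDr : forall m n n', h m (n + n') = h m n + aL (nu n) (h m n');
  cs_hP : forall p m n, h (aM p m) (aN p n) = aL p (h m n) }.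

Section Sub.
Variables (G : Grp) (S : G -> Prop) (S0 : S 0)
  (SD : forall x y, S x -> S y -> S (x + y)) (SN : forall x, S x -> S (- x)).

Definition sub_car := {x : G | S x}.
Definition sub_add (u v : sub_car) : sub_car :=
  exist _ (proj1_sig u + proj1_sig v) (SD (proj2_sig u) (proj2_sig v)).
Definition sub_zero : sub_car := exist _ 0 S0.
Definition sub_opp (u : sub_car) : sub_car := exist _ (- proj1_sig u) (SN (proj2_sig u)).

Lemma sub_eq (u v : sub_car) : proj1_sig u = proj1_sig v -> u = v.
Proof.
  destruct u as [x hx], v as [y hy]; simpl; intro E; subst y.
  f_equal; apply proof_irrelevance.
Qed.

Definition subGrp : Grp :=
  {| gcar := sub_car; gadd := sub_add; gzero := sub_zero; gopp := sub_opp;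
     gaddA := fun x y z => @sub_eq (sub_add x (sub_add y z)) (sub_add (sub_add x y) z)
                 (gaddA _ _ _);
     gadd0l := fun x => @sub_eq (sub_add sub_zero x) x (gadd0l _);
     gadd0r := fun x => @sub_eq (sub_add x sub_zero) x (gadd0r _);
     gaddNl := fun x => @sub_eq (sub_add (sub_opp x) x) sub_zero (gaddNl _);
     gaddNr := fun x => @sub_eq (sub_add x (sub_opp x)) sub_zero (gaddNr _) |}.
End Sub.

Section Kernel.
Variables (G H : Grp) (f : G -> H) (hf : is_hom f).

Lemma ker0 : f 0 = 0.
Proof. apply hom0; exact hf. Qed.
Lemma kerD x y : f x = 0 -> f y = 0 -> f (x + y) = 0.
Proof. intros Hx Hy. rewrite hf, Hx, Hy, gadd0l. reflexivity. Qed.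
Lemma kerN x : f x = 0 -> f (- x) = 0.
Proof. intro Hx. rewrite (homN x hf), Hx. apply (@addKr H 0). rewrite gaddNl, gadd0l. reflexivity. Qed.

Definition kerGrp : Grp :=
  @subGrp G (fun x => f x = 0) ker0 kerD kerN.
End Kernel.

Section ICdata.
Variable C : IntCatXMod.

Definition Lgrp : Grp := kerGrp (xmor_homA (s_xmorph C)).
Definition Mgrp : Grp := kerGrp (xmor_homB (s_xmorph C)).
Definition Ngrp : Grp := xA (ic0 C).
Definition Pgrp : Grp := xB (ic0 C).

Lemma lam_ok (x : xA (ic1 C)) : sA C x = 0 -> sB C (xalpha (ic1 C) x) = 0.
Proof.
  intro Hx. rewrite (xmor_alpha (s_xmorph C)), Hx.
  apply hom0; exact (xm_hom (xmodP (ic0 C))).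
Qed.

Definition lamC (l : Lgrp) : Mgrp :=
  exist _ (xalpha (ic1 C) (proj1_sig l)) (lam_ok (proj2_sig l)).
Definition lam'C (l : Lgrp) : Ngrp := tA C (proj1_sig l).
Definition muC (m : Mgrp) : Pgrp := tB C (proj1_sig m).
Definition nuC (n : Ngrp) : Pgrp := xalpha (ic0 C) n.

Definition aNC (p : Pgrp) (n : Ngrp) : Ngrp := xact (ic0 C) p n.

Lemma aM_ok (p : Pgrp) (x : xB (ic1 C)) : sB C x = 0 ->
  sB C (eB C p + x - eB C p) = 0.
Proof.
  intro Hx. pose proof (xmor_homB (s_xmorph C)) as hs.
  rewrite !hs, (homN _ hs), seB, Hx, gadd0r, gaddNr. reflexivity.
Qed.

Definition aMC (p : Pgrp) (m : Mgrp) : Mgrp :=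
  exist _ (eB C p + proj1_sig m - eB C p) (aM_ok p (proj2_sig m)).

Lemma aL_ok (p : Pgrp) (x : xA (ic1 C)) : sA C x = 0 ->
  sA C (xact (ic1 C) (eB C p) x) = 0.
Proof.
  intro Hx. rewrite (xmor_act (s_xmorph C)), seB, Hx.
  apply hom0; exact (act_hom (xm_action (xmodP (ic0 C))) p).
Qed.

Definition aLC (p : Pgrp) (l : Lgrp) : Lgrp :=
  exist _ (xact (ic1 C) (eB C p) (proj1_sig l)) (aL_ok p (proj2_sig l)).

Lemma h_ok (x : xB (ic1 C)) (n : Ngrp) : sB C x = 0 ->
  sA C (xact (ic1 C) x (eA C n) - eA C n) = 0.
Proof.
  intro Hx. pose proof (xmor_homA (s_xmorph C)) as hs.
  rewrite hs, (homN _ hs), (xmor_act (s_xmorph C)), Hx, seA,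
    (act0 (xm_action (xmodP (ic0 C)))), gaddNr.
  reflexivity.
Qed.

Definition hC (m : Mgrp) (n : Ngrp) : Lgrp :=
  exist _ (xact (ic1 C) (proj1_sig m) (eA C n) - eA C n) (h_ok n (proj2_sig m)).
End ICdata.
Arguments lamC : clear implicits.
Arguments lam'C : clear implicits.
Arguments muC : clear implicits.
Arguments nuC : clear implicits.
Arguments aLC : clear implicits.
Arguments aMC : clear implicits.
Arguments aNC : clear implicits.
Arguments hC : clear implicits.

From Stdlib Require Import ProofIrrelevance Setoid.
Set Implicit Arguments.
Unset Strict Implicit.

(* Both the A-part and the B-part of C form an internal category in groups.
   There the composition is forced by the interchange law to be
   m(x, y) = x - 1_{s x} + y, and as a consequence ker s and ker t commute
   elementwise.  At the level of crossed modules, compatibility of m with the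
   action forces ker s_B to act trivially on ker t_A and ker t_B to act
   trivially on ker s_A; hence on ker s_A an element b acts as 1_{t b}, just as
   conjugation by b agrees with conjugation by 1_{t b} on ker s_B.  With these
   identities every axiom of the crossed square reduces to the crossed module
   axioms of C_1 and C_0 and group arithmetic. *)

Section GroupLemmas.
Variable G : Grp.
Implicit Types x y : G.

Lemma oppg0 : - (0 : G) = 0.
Proof. apply (@addKr G 0). rewrite gaddNl, gadd0l. reflexivity. Qed.

Lemma oppgK x : - - x = x.
Proof. apply (@addKr G (- x)). rewrite gaddNl, gaddNr. reflexivity. Qed.

Lemma oppgD x y : - (x + y) = - y + - x.
Proof.
  apply (@addKl G (x + y)).
  rewrite gaddNr, gaddA, <- (gaddA x y), gaddNr, gadd0r, gaddNr. reflexivity.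
Qed.

Lemma addgK x y : x + y - y = x.
Proof. rewrite <- gaddA, gaddNr, gadd0r. reflexivity. Qed.

Lemma addgNK x y : x - y + y = x.
Proof. rewrite <- gaddA, gaddNl, gadd0r. reflexivity. Qed.
End GroupLemmas.

Ltac grp_simpl :=
  repeat rewrite ?gaddA, ?oppgD, ?oppgK, ?addgK, ?addgNK,
    ?gaddNr, ?gaddNl, ?gadd0l, ?gadd0r, ?oppg0.

Lemma conj_action (P G : Grp) (f : P -> G) :
  is_hom f -> is_action (fun p (x : G) => f p + x - f p).
Proof.
  intro hf; split.
  - intro x. rewrite (hom0 hf), oppg0, gadd0l, gadd0r. reflexivity.
  - intros p q x. rewrite hf, oppgD. grp_simpl. reflexivity.
  - intros p x y. grp_simpl. reflexivity.
Qed.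

Lemma comp_action (P B X : Grp) (f : P -> B) (a : B -> X -> X) :
  is_hom f -> is_action a -> is_action (fun p => a (f p)).
Proof.
  intros hf [a0 aD ah]; split.
  - intro x. rewrite (hom0 hf). apply a0.
  - intros p q x. rewrite hf. apply aD.
  - intro p. apply ah.
Qed.

Section SubAction.
Variables (P G : Grp) (S : G -> Prop) (S0 : S 0)
  (SD : forall x y, S x -> S y -> S (x + y)) (SN : forall x, S x -> S (- x))
  (a : P -> G -> G) (aS : forall p x, S x -> S (a p x)).

Lemma sub_action : is_action a ->
  is_action (X := subGrp S0 SD SN)
    (fun p u => exist S (a p (proj1_sig u)) (aS p (proj2_sig u))).
Proof.
  intros [a0 aD ah]; split.
  - intro u. apply sub_eq. apply a0.
  - intros p q u. apply sub_eq. apply aD.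
  - intros p u v. apply sub_eq. apply ah.
Qed.
End SubAction.
Arguments sub_action {P G S S0 SD SN a} aS.

Section XModLemmas.
Variable X : XMod.

Lemma xact_id a : xact X 0 a = a.
Proof. apply (act0 (xm_action (xmodP X))). Qed.
Lemma xact_comp p q a : xact X (p + q) a = xact X p (xact X q a).
Proof. apply (actD (xm_action (xmodP X))). Qed.
Lemma xactD b a a' : xact X b (a + a') = xact X b a + xact X b a'.
Proof. apply (act_hom (xm_action (xmodP X))). Qed.
Lemma xact0 b : xact X b 0 = 0.
Proof. apply hom0, (act_hom (xm_action (xmodP X))). Qed.
Lemma xactN b a : xact X b (- a) = - xact X b a.
Proof. apply homN, (act_hom (xm_action (xmodP X))). Qed.
Lemma xalphaD a a' : xalpha X (a + a') = xalpha X a + xalpha X a'.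
Proof. apply (xm_hom (xmodP X)). Qed.
Lemma xalphaN a : xalpha X (- a) = - xalpha X a.
Proof. apply homN, (xm_hom (xmodP X)). Qed.
Lemma xalpha_act b a : xalpha X (xact X b a) = b + xalpha X a - b.
Proof. apply (xm_equiv (xmodP X)). Qed.
Lemma xact_alpha a a' : xact X (xalpha X a) a' = a + a' - a.
Proof. apply (xm_peiffer (xmodP X)). Qed.
End XModLemmas.

Section UnitalComposition.
Variables (G1 G0 : Grp) (s t : G1 -> G0) (e : G0 -> G1)
  (m : forall x y : G1, s x = t y -> G1).

Record is_unital_comp : Prop := {
  uc_src_hom : is_hom s;
  uc_tgt_hom : is_hom t;
  uc_unit_hom : is_hom e;
  uc_comp_hom : forall x y x' y' (H : s x = t y) (H' : s x' = t y')
    (H'' : s (x + x') = t (y + y')), m H'' = m H + m H';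
  uc_src_unit : forall a, s (e a) = a;
  uc_tgt_unit : forall a, t (e a) = a;
  uc_unitl : forall x (H : s (e (t x)) = t x), m H = x;
  uc_unitr : forall x (H : s x = t (e (s x))), m H = x }.

Hypothesis Hm : is_unital_comp.

Lemma comp_irr x y x' y' (H : s x = t y) (H' : s x' = t y') :
  x = x' -> y = y' -> m H = m H'.
Proof. intros -> ->. f_equal. apply proof_irrelevance. Qed.

Lemma comp_unitl x y (H : s x = t y) : x = e (t y) -> m H = y.
Proof. intro E. subst x. apply (uc_unitl Hm). Qed.

Lemma comp_unitr x y (H : s x = t y) : y = e (s x) -> m H = x.
Proof. intro E. subst y. apply (uc_unitr Hm). Qed.

Lemma comp_0l x y (H : s x = t y) : x = 0 -> t y = 0 -> m H = y.
Proof.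
  intros -> hy. apply comp_unitl. rewrite hy, (hom0 (uc_unit_hom Hm)). reflexivity.
Qed.

Lemma comp_0r x y (H : s x = t y) : y = 0 -> s x = 0 -> m H = x.
Proof.
  intros -> hx. apply comp_unitr. rewrite hx, (hom0 (uc_unit_hom Hm)). reflexivity.
Qed.

Lemma src_tgt_add x y x' y' :
  s x = t y -> s x' = t y' -> s (x + x') = t (y + y').
Proof.
  intros H H'. rewrite (uc_src_hom Hm), (uc_tgt_hom Hm), H, H'. reflexivity.
Qed.

Lemma tgt_sub_unit x : t (x - e (t x)) = 0.
Proof.
  rewrite (uc_tgt_hom Hm), (homN _ (uc_tgt_hom Hm)), (uc_tgt_unit Hm), gaddNr.
  reflexivity.
Qed.

(* Split (x, y) as (x, 1_{s x}) + (-1_{s x}, -1_{s x}) + (1_{s x}, y). *)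
Lemma comp_formula x y (H : s x = t y) : m H = x - e (s x) + y.
Proof.
  pose proof (uc_src_hom Hm) as hs; pose proof (uc_tgt_hom Hm) as ht.
  pose proof (uc_src_unit Hm) as se; pose proof (uc_tgt_unit Hm) as te.
  set (u := e (s x)).
  assert (H1 : s x = t u) by (unfold u; rewrite te; reflexivity).
  assert (H2 : s (- u) = t (- u))
    by (rewrite (homN _ hs), (homN _ ht); unfold u; rewrite se, te; reflexivity).
  assert (H3 : s u = t y) by (unfold u; rewrite se; exact H).
  rewrite (comp_irr H (src_tgt_add (src_tgt_add H1 H2) H3)) by (grp_simpl; reflexivity).
  rewrite (uc_comp_hom Hm (src_tgt_add H1 H2) H3), (uc_comp_hom Hm H1 H2).
  rewrite (comp_unitr H1), (comp_unitl H2), (comp_unitl H3); try reflexivity.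
  - unfold u; rewrite H; reflexivity.
  - rewrite (homN _ ht); unfold u; rewrite te, (homN _ (uc_unit_hom Hm)). reflexivity.
Qed.

Lemma ker_src_ker_tgt_commute a b : s a = 0 -> t b = 0 -> a + b = b + a.
Proof.
  intros ha hb.
  assert (H0b : s 0 = t b) by (rewrite hb; exact (hom0 (uc_src_hom Hm))).
  assert (Ha0 : s a = t 0) by (rewrite ha; symmetry; exact (hom0 (uc_tgt_hom Hm))).
  pose proof (uc_comp_hom Hm H0b Ha0 (src_tgt_add H0b Ha0)) as E.
  rewrite !comp_formula, gadd0l, ha, (hom0 (uc_src_hom Hm)), (hom0 (uc_unit_hom Hm)),
    !oppg0, !gadd0r, !gadd0l in E.
  exact E.
Qed.

Lemma conj_ker_src x y : s y = 0 -> x + y - x = e (t x) + y - e (t x).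
Proof.
  intro hy. pose proof (uc_src_hom Hm) as hs.
  set (u := e (t x)).
  assert (hc : s (u + y - u) = 0).
  { rewrite !hs, (homN _ hs), hy. unfold u. rewrite (uc_src_unit Hm). grp_simpl. reflexivity. }
  transitivity ((x - u) + (u + y - u) - (x - u)); [grp_simpl; reflexivity|].
  assert (hk : t (x - u) = 0) by exact (tgt_sub_unit x).
  rewrite <- (ker_src_ker_tgt_commute hc hk), addgK. reflexivity.
Qed.
End UnitalComposition.
Arguments is_unital_comp {G1 G0} s t e m.

Ltac unfold_square_data :=
  unfold lamC, lam'C, muC, nuC, aLC, aMC, aNC, hC; cbn.

Section InternalCategory.
Variable C : IntCatXMod.

Local Notation act1 := (xact (ic1 C)).

Let hsA := xmor_homA (s_xmorph C).
Let hsB := xmor_homB (s_xmorph C).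
Let htA := xmor_homA (t_xmorph C).
Let htB := xmor_homB (t_xmorph C).
Let heA := xmor_homA (e_xmorph C).
Let heB := xmor_homB (e_xmorph C).

Lemma unital_compA : is_unital_comp (sA C) (tA C) (eA C) (mA C).
Proof.
  exact (Build_is_unital_comp hsA htA heA (mA_hom C) (seA C) (teA C) (unitlA C) (unitrA C)).
Qed.

Lemma unital_compB : is_unital_comp (sB C) (tB C) (eB C) (mB C).
Proof.
  exact (Build_is_unital_comp hsB htB heB (mB_hom C) (seB C) (teB C) (unitlB C) (unitrB C)).
Qed.

(* Both are read off from [m_act] applied to a pair of composable pairs
   having a zero component. *)
Lemma act_kersB_kertA b x : sB C b = 0 -> tA C x = 0 -> act1 b x = x.
Proof.
  intros hb hx.
  assert (Hb : sB C b = tB C 0) by (rewrite hb, (hom0 htB); reflexivity).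
  assert (Hx : sA C 0 = tA C x) by (rewrite hx, (hom0 hsA); reflexivity).
  assert (H : sA C (act1 b 0) = tA C (act1 0 x))
    by (rewrite xact0, xact_id, hx; exact (hom0 hsA)).
  pose proof (m_act C b 0 0 x Hb Hx H) as E.
  rewrite (comp_0l unital_compA H), (comp_0r unital_compB Hb), (comp_0l unital_compA Hx),
    xact_id in E by (rewrite ?xact0, ?xact_id; auto).
  symmetry; exact E.
Qed.

Lemma act_kertB_kersA b x : tB C b = 0 -> sA C x = 0 -> act1 b x = x.
Proof.
  intros hb hx.
  assert (Hb : sB C 0 = tB C b) by (rewrite hb, (hom0 hsB); reflexivity).
  assert (Hx : sA C x = tA C 0) by (rewrite hx, (hom0 htA); reflexivity).
  assert (H : sA C (act1 0 x) = tA C (act1 b 0))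
    by (rewrite xact0, xact_id, hx; symmetry; exact (hom0 htA)).
  pose proof (m_act C 0 b x 0 Hb Hx H) as E.
  rewrite (comp_0r unital_compA H), (comp_0l unital_compB Hb), (comp_0r unital_compA Hx),
    xact_id in E by (rewrite ?xact0, ?xact_id; auto).
  symmetry; exact E.
Qed.

Lemma act_kersA_unit b x : sA C x = 0 -> act1 b x = act1 (eB C (tB C b)) x.
Proof.
  intro hx.
  rewrite <- (addgNK b (eB C (tB C b))) at 1.
  rewrite xact_comp, act_kertB_kersA; [reflexivity | apply (tgt_sub_unit unital_compB) |].
  rewrite (xmor_act (s_xmorph C)), seB, hx. apply xact0.
Qed.

Lemma lamC_hom : is_hom (lamC C).
Proof. intros [x hx] [y hy]. apply sub_eq. apply xalphaD. Qed.

Lemma lam'C_hom : is_hom (lam'C C).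
Proof. intros [x hx] [y hy]. apply htA. Qed.

Lemma muC_hom : is_hom (muC C).
Proof. intros [x hx] [y hy]. apply htB. Qed.

Lemma nuC_lam'C l : nuC C (lam'C C l) = muC C (lamC C l).
Proof. destruct l as [x hx]. symmetry. apply (xmor_alpha (t_xmorph C)). Qed.

Lemma aLC_action : is_action (aLC C).
Proof. exact (sub_action (@aL_ok C) (comp_action heB (xm_action (xmodP (ic1 C))))). Qed.

Lemma aMC_action : is_action (aMC C).
Proof. exact (sub_action (@aM_ok C) (conj_action heB)). Qed.

Lemma lamC_equiv p l : lamC C (aLC C p l) = aMC C p (lamC C l).
Proof. destruct l as [x hx]. apply sub_eq. apply xalpha_act. Qed.

Lemma lam'C_equiv p l : lam'C C (aLC C p l) = aNC C p (lam'C C l).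
Proof.
  destruct l as [x hx]. unfold_square_data.
  rewrite (xmor_act (t_xmorph C)), teB. reflexivity.
Qed.

Lemma muC_xmod : is_xmod (aMC C) (muC C).
Proof.
  split.
  - exact aMC_action.
  - exact muC_hom.
  - intros p [y hy]. unfold_square_data. rewrite !htB, (homN _ htB), teB. reflexivity.
  - intros [x hx] [y hy]. apply sub_eq; unfold_square_data.
    symmetry. exact (conj_ker_src unital_compB x hy).
Qed.

Lemma lamC_muC_xmod : is_xmod (aLC C) (fun l => muC C (lamC C l)).
Proof.
  split.
  - exact aLC_action.
  - intros [x hx] [y hy]. unfold_square_data. rewrite xalphaD. apply htB.
  - intros p [x hx]. unfold_square_data. rewrite xalpha_act, !htB, (homN _ htB), teB. reflexivity.
  - intros [x hx] [y hy]. apply sub_eq; unfold_square_data.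
    rewrite <- (act_kersA_unit _ hy). apply xact_alpha.
Qed.

Lemma lamC_hC m n : lamC C (hC C m n) = m + aMC C (nuC C n) (- m).
Proof.
  destruct m as [x hx]. apply sub_eq; unfold_square_data.
  rewrite xalphaD, xalphaN, xalpha_act, <- (xmor_alpha (e_xmorph C)).
  grp_simpl. reflexivity.
Qed.

Lemma lam'C_hC m n : lam'C C (hC C m n) = aNC C (muC C m) n - n.
Proof.
  destruct m as [x hx]. unfold_square_data.
  rewrite htA, (homN _ htA), (xmor_act (t_xmorph C)), teA. reflexivity.
Qed.

Lemma hC_lamCl l n : hC C (lamC C l) n = l + aLC C (nuC C n) (- l).
Proof.
  destruct l as [x hx]. apply sub_eq; unfold_square_data.
  rewrite (xmor_alpha (e_xmorph C)), !xact_alpha. grp_simpl. reflexivity.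
Qed.

(* With k := l - 1_{t l} in ker t_A, m fixes k, so m . l - l is the
   conjugate by k of h(m, t l), which lies in ker s_A. *)
Lemma hC_lam'Cr m l : hC C m (lam'C C l) = aLC C (muC C m) l - l.
Proof.
  destruct m as [b hb], l as [x hx]. apply sub_eq; unfold_square_data.
  rewrite <- (act_kersA_unit b hx).
  set (u := eA C (tA C x)).
  assert (hk : tA C (x - u) = 0) by exact (tgt_sub_unit unital_compA x).
  assert (hh : sA C (act1 b u - u) = 0) by exact (h_ok (tA C x) hb).
  assert (E : act1 b x = (x - u) + act1 b u).
  { rewrite <- (addgNK x u) at 1. rewrite xactD, (act_kersB_kertA hb hk). reflexivity. }
  transitivity ((x - u) + (act1 b u - u) - (x - u)).
  - rewrite <- (ker_src_ker_tgt_commute unital_compA hh hk), addgK. reflexivity.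
  - rewrite E. grp_simpl. reflexivity.
Qed.

Lemma hCDl m m' n : hC C (m + m') n = aLC C (muC C m) (hC C m' n) + hC C m n.
Proof.
  destruct m as [b hb], m' as [b' hb']. apply sub_eq; unfold_square_data.
  rewrite <- (act_kersA_unit b (h_ok n hb')), xact_comp, xactD, xactN.
  grp_simpl. reflexivity.
Qed.

Lemma hCDr m n n' : hC C m (n + n') = hC C m n + aLC C (nuC C n) (hC C m n').
Proof.
  destruct m as [b hb]. apply sub_eq; unfold_square_data.
  rewrite heA, xactD, (xmor_alpha (e_xmorph C)), xact_alpha.
  grp_simpl. reflexivity.
Qed.

Lemma hC_act p m n : hC C (aMC C p m) (aNC C p n) = aLC C p (hC C m n).
Proof.
  destruct m as [b hb]. apply sub_eq; unfold_square_data.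
  rewrite (xmor_act (e_xmorph C)), <- xact_comp, addgNK, xact_comp, xactD, xactN.
  reflexivity.
Qed.
End InternalCategory.

Theorem mainTheorem2 (C : IntCatXMod) :
  @crossed_square (Lgrp C) (Mgrp C) (Ngrp C) (Pgrp C)
    (lamC C) (lam'C C) (muC C) (nuC C)
    (aLC C) (aMC C) (aNC C) (hC C).
Proof.
  exact (Build_crossed_square
    (@lamC_hom C) (@lam'C_hom C) (@muC_hom C) (xm_hom (xmodP (ic0 C)))
    (@nuC_lam'C C) (@aLC_action C) (@aMC_action C) (xm_action (xmodP (ic0 C)))
    (@lamC_equiv C) (@lam'C_equiv C)
    (@muC_xmod C) (xmodP (ic0 C)) (@lamC_muC_xmod C)
    (@lamC_hC C) (@lam'C_hC C) (@hC_lamCl C) (@hC_lam'Cr C)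
    (@hCDl C) (@hCDr C) (@hC_act C)).
Qed.
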